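(* Let $m,n\ge 2$. Then $(H(m),H(n),H(m,n),H(n,m))$ is a Hopf-Galois system, with structure maps $\alpha,\beta,\gamma,\delta$ all given on generators by $x^{(\alpha)}_{ij}\mapsto\sum_k x^{(\alpha)}_{ik}\otimes x^{(\alpha)}_{kj}$.
   Context: $k$ is a field. For $m,n\in\mathbb N^*$, $H(m,n)$ is the universal algebra with generators $x^{(\alpha)}_{ij}$, $1\le i\le m$, $1\le j\le n$, $\alpha\in\mathbb N$, and relations $x^{(\alpha)}\,{}^tx^{(\alpha+1)}=I_m$ and ${}^tx^{(\alpha+1)}x^{(\alpha)}=I_n$ for all $\alpha\in\mathbb N$, where $x^{(\alpha)}=(x^{(\alpha)}_{ij})$. $H(m):=H(m,m)$ is the free Hopf algebra on the matrix coalgebra $M_m(k)^*$, with $\Delta(x^{(\alpha)}_{ij})=\sum_k x^{(\alpha)}_{ik}\otimes x^{(\alpha)}_{kj}$, $\varepsilon(x^{(\alpha)}_{ij})=\delta_{ij}$, $S(x^{(\alpha)})={}^tx^{(\alpha+1)}$. A Hopf-Galois system consists of four non-zero $k$-algebras $(A,B,Z,T)$ with: (HG1) $A,B$ bialgebras; (HG2) $Z$ an $A$-$B$-bicomodule algebra with coactions $\alpha:Z\to A\otimes Z$, $\beta:Z\to Z\otimes B$; (HG3) algebra morphisms $\gamma:A\to Z\otimes T$, $\delta:B\to T\otimes Z$ with $(\gamma\otimes 1_Z)\alpha=(1_Z\otimes\delta)\beta$, $(\alpha\otimes 1_T)\gamma=(1_A\otimes\gamma)\Delta_A$, $(1_T\otimes\beta)\delta=(\delta\otimes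 1_B)\Delta_B$; (HG4) a linear map $S:T\to Z$ with $m_Z(1_Z\otimes S)\gamma=u_Z\varepsilon_A$ and $m_Z(S\otimes 1_Z)\delta=u_Z\varepsilon_B$. *)

From HB Require Import structures.
From mathcomp Require Import all_boot all_order all_algebra.
Set Implicit Arguments.
Unset Strict Implicit.
Unset Printing Implicit Defensive.
Import GRing.Theory.
Local Open Scope ring_scope.

Inductive term (k : fieldType) (X : Type) : Type :=
| tGen of X
| tScal of k                       (* c * 1 *)
| tAdd of term k X & term k X
| tMul of term k X & term k X.
Arguments tGen {k X}.
Arguments tScal {k X}.
Arguments tAdd {k X}.
Arguments tMul {k X}.

(* substitution of generators = the algebra map determined by generator images *)
Fixpoint subst (k : fieldType) (X Y : Type) (f : X -> term k Y) (t : term k X)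
  : term k Y :=
  match t with
  | tGen x => f x
  | tScal c => tScal c
  | tAdd s u => tAdd (subst f s) (subst f u)
  | tMul s u => tMul (subst f s) (subst f u)
  end.

Definition tmap (k : fieldType) (X Y : Type) (h : X -> Y) : term k X -> term k Y :=
  subst (fun x => tGen (h x)).

Definition sumt (k : fieldType) (X : Type) (s : seq (term k X)) : term k X :=
  foldr tAdd (tScal 0) s.

Record pres (k : fieldType) := Pres {
  gen : Type;
  rel : term k gen -> term k gen -> Prop }.
Arguments gen {k}.
Arguments rel {k}.

(* The congruence defining the universal k-algebra k<gen P>/(rel P):
   the least congruence containing the relations and the axioms of a
   unital associative k-algebra (k mapped centrally via tScal). *)
Inductive eqv (k : fieldType) (P : pres k) : term k (gen P) -> term k (gen P) -> Prop :=
| eqv_refl t : @eqv k P t t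
| eqv_sym s t : @eqv k P s t -> @eqv k P t s
| eqv_trans s t u : @eqv k P s t -> @eqv k P t u -> @eqv k P s u
| eqv_add s s' t t' : @eqv k P s s' -> @eqv k P t t' -> @eqv k P (tAdd s t) (tAdd s' t')
| eqv_mul s s' t t' : @eqv k P s s' -> @eqv k P t t' -> @eqv k P (tMul s t) (tMul s' t')
| eqv_rel s t : rel P s t -> @eqv k P s t
| eqv_addA s t u : @eqv k P (tAdd s (tAdd t u)) (tAdd (tAdd s t) u)
| eqv_addC s t : @eqv k P (tAdd s t) (tAdd t s)
| eqv_add0 t : @eqv k P (tAdd (tScal 0) t) t
| eqv_addN t : @eqv k P (tAdd t (tMul (tScal (-1)) t)) (tScal 0)
| eqv_mulA s t u : @eqv k P (tMul s (tMul t u)) (tMul (tMul s t) u)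
| eqv_mul1l t : @eqv k P (tMul (tScal 1) t) t
| eqv_mul1r t : @eqv k P (tMul t (tScal 1)) t
| eqv_mulDl s t u : @eqv k P (tMul (tAdd s t) u) (tAdd (tMul s u) (tMul t u))
| eqv_mulDr s t u : @eqv k P (tMul u (tAdd s t)) (tAdd (tMul u s) (tMul u t))
| eqv_scalD a b : @eqv k P (tScal (a + b)) (tAdd (tScal a) (tScal b))
| eqv_scalM a b : @eqv k P (tScal (a * b)) (tMul (tScal a) (tScal b))
| eqv_scalC c t : @eqv k P (tMul (tScal c) t) (tMul t (tScal c)).

Arguments eqv {k} P _ _.

(* the ground field k itself: no generators, no relations *)
Definition kpres (k : fieldType) : pres k := @Pres k Empty_set (fun _ _ => False).

(* tensor product of presented algebras:
   k<X>/(R) (x) k<Y>/(S) = k<X + Y>/(R, S, [x, y] = 0) *)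
Inductive tens_rel (k : fieldType) (P Q : pres k) :
    term k (gen P + gen Q) -> term k (gen P + gen Q) -> Prop :=
| TRl s t : rel P s t -> @tens_rel k P Q (tmap inl s) (tmap inl t)
| TRr s t : rel Q s t -> @tens_rel k P Q (tmap inr s) (tmap inr t)
| TRc (x : gen P) (y : gen Q) :
    @tens_rel k P Q (tMul (tGen (inl x)) (tGen (inr y))) (tMul (tGen (inr y)) (tGen (inl x))).

Definition tens (k : fieldType) (P Q : pres k) : pres k :=
  @Pres k (gen P + gen Q)%type (@tens_rel k P Q).

(* algebra maps are given by generator images f : gen P -> term (gen Q);
   f defines an algebra morphism P -> Q iff it respects the congruence *)
Definition is_alg_morph (k : fieldType) (P Q : pres k) (f : gen P -> term k (gen Q)) :=
  forall s t, eqv P s t -> eqv Q (subst f s) (subst f t).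

Arguments is_alg_morph {k} P Q f.

Definition eqmap (k : fieldType) (P Q : pres k) (F G : term k (gen P) -> term k (gen Q)) :=
  forall t, eqv Q (F t) (G t).

Arguments eqmap {k} P Q F G.

Definition tensor_map (k : fieldType) (X X' Y Y' : Type)
  (f : X -> term k Y) (g : X' -> term k Y') : (X + X')%type -> term k (Y + Y') :=
  fun z => match z with
           | inl x => tmap inl (f x)
           | inr x' => tmap inr (g x')
           end.

Definition idg (k : fieldType) (X : Type) : X -> term k X := fun x => tGen x.

Definition assocg (k : fieldType) (X Y W : Type) :
    ((X + Y) + W)%type -> term k (X + (Y + W)) :=
  fun z => match z with
           | inl (inl x) => tGen (inl x)
           | inl (inr y) => tGen (inr (inl y))
           | inr w => tGen (inr (inr w))
           end.

Definition lunitg (k : fieldType) (X : Type) : (Empty_set + X)%type -> term k X :=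
  fun z => match z with inl e => match e with end | inr x => tGen x end.
Definition runitg (k : fieldType) (X : Type) : (X + Empty_set)%type -> term k X :=
  fun z => match z with inl x => tGen x | inr e => match e with end end.

(* the unit map u : k -> P *)
Definition unitg (k : fieldType) (X : Type) : Empty_set -> term k X :=
  fun e => match e with end.

(* decomposition of an element of X (x) Y into a sum of pure tensors *)
Fixpoint split (k : fieldType) (X Y : Type) (t : term k (X + Y))
  : seq (term k X * term k Y) :=
  match t with
  | tGen (inl x) => [:: (tGen x, tScal 1)]
  | tGen (inr y) => [:: (tScal 1, tGen y)]
  | tScal c => [:: (tScal c, tScal 1)]
  | tAdd s u => split s ++ split u
  | tMul s u => [seq (tMul a.1 b.1, tMul a.2 b.2) | a <- split s, b <- split u]
  end.

(* the linear map X (x) Y -> W induced by a bilinear F : x (x) y |-> F x y *)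
Definition lin_tensor (k : fieldType) (X Y W : Type)
  (F : term k X -> term k Y -> term k W) (t : term k (X + Y)) : term k W :=
  sumt [seq F p.1 p.2 | p <- split t].

Definition is_linear (k : fieldType) (P Q : pres k) (S : term k (gen P) -> term k (gen Q)) :=
  [/\ forall s t, eqv P s t -> eqv Q (S s) (S t),
      forall s t, eqv Q (S (tAdd s t)) (tAdd (S s) (S t)) &
      forall c t, eqv Q (S (tMul (tScal c) t)) (tMul (tScal c) (S t))].

Arguments is_linear {k} P Q S.

Definition nonzero (k : fieldType) (P : pres k) := ~ eqv P (tScal 1) (tScal 0).

Arguments nonzero {k} P.

Definition bialgebra (k : fieldType) (A : pres k)
  (D : gen A -> term k (gen (tens A A))) (e : gen A -> term k (gen (kpres k))) :=
  [/\ is_alg_morph A (tens A A) D, is_alg_morph A (kpres k) e,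
      eqmap A (tens A (tens A A))
        (fun t => subst (@assocg k _ _ _) (subst (tensor_map D (@idg k _)) (subst D t)))
        (fun t => subst (tensor_map (@idg k _) D) (subst D t)),
      eqmap A A
        (fun t => subst (@lunitg k _) (subst (tensor_map e (@idg k _)) (subst D t)))
        (fun t => t) &
      eqmap A A
        (fun t => subst (@runitg k _) (subst (tensor_map (@idg k _) e) (subst D t)))
        (fun t => t)].

Definition HG_system (k : fieldType) (A B Z T : pres k)
  (DA : gen A -> term k (gen (tens A A))) (eA : gen A -> term k (gen (kpres k)))
  (DB : gen B -> term k (gen (tens B B))) (eB : gen B -> term k (gen (kpres k)))
  (al : gen Z -> term k (gen (tens A Z))) (be : gen Z -> term k (gen (tens Z B)))
  (ga : gen A -> term k (gen (tens Z T))) (de : gen B -> term k (gen (tens T Z))) :=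
  [/\ [/\ nonzero A, nonzero B, nonzero Z & nonzero T],
      bialgebra DA eA /\ bialgebra DB eB,
      (* HG2 : Z is an A-B-bicomodule algebra *)
      [/\ [/\ is_alg_morph Z (tens A Z) al,
              eqmap Z (tens A (tens A Z))
                (fun t => subst (@assocg k _ _ _) (subst (tensor_map DA (@idg k _)) (subst al t)))
                (fun t => subst (tensor_map (@idg k _) al) (subst al t)) &
              eqmap Z Z
                (fun t => subst (@lunitg k _) (subst (tensor_map eA (@idg k _)) (subst al t)))
                (fun t => t)],
          [/\ is_alg_morph Z (tens Z B) be,
              eqmap Z (tens Z (tens B B))
                (fun t => subst (@assocg k _ _ _) (subst (tensor_map be (@idg k _)) (subst be t)))
                (fun t => subst (tensor_map (@idg k _) DB) (subst be t)) &
              eqmap Z Z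
                (fun t => subst (@runitg k _) (subst (tensor_map (@idg k _) eB) (subst be t)))
                (fun t => t)] &
          eqmap Z (tens A (tens Z B))
            (fun t => subst (@assocg k _ _ _) (subst (tensor_map al (@idg k _)) (subst be t)))
            (fun t => subst (tensor_map (@idg k _) be) (subst al t))],
      [/\ is_alg_morph A (tens Z T) ga, is_alg_morph B (tens T Z) de,
          eqmap Z (tens Z (tens T Z))
            (fun t => subst (@assocg k _ _ _) (subst (tensor_map ga (@idg k _)) (subst al t)))
            (fun t => subst (tensor_map (@idg k _) de) (subst be t)),
          eqmap A (tens A (tens Z T))
            (fun t => subst (@assocg k _ _ _) (subst (tensor_map al (@idg k _)) (subst ga t)))
            (fun t => subst (tensor_map (@idg k _) ga) (subst DA t)) &
          eqmap B (tens T (tens Z B))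
            (fun t => subst (tensor_map (@idg k _) be) (subst de t))
            (fun t => subst (@assocg k _ _ _) (subst (tensor_map de (@idg k _)) (subst DB t)))] &
      exists S : term k (gen T) -> term k (gen Z),
        [/\ is_linear T Z S,
            eqmap A Z
              (fun t => lin_tensor (fun z u => tMul z (S u)) (subst ga t))
              (fun t => subst (@unitg k _) (subst eA t)) &
            eqmap B Z
              (fun t => lin_tensor (fun u z => tMul (S u) z) (subst de t))
              (fun t => subst (@unitg k _) (subst eB t))]].

Definition Hgen (m n : nat) := (nat * 'I_m * 'I_n)%type.

Definition kdelta (k : fieldType) (p : nat) (i j : 'I_p) : k := if i == j then 1 else 0.

(* x^(a) tx^(a+1) = I_m  and  tx^(a+1) x^(a) = I_n *)
Inductive Hrel (k : fieldType) (m n : nat) : term k (Hgen m n) -> term k (Hgen m n) -> Prop :=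
| Hrel1 (a : nat) (i j : 'I_m) :
    @Hrel k m n (sumt [seq tMul (tGen (a, i, l)) (tGen (a.+1, j, l)) | l <- enum 'I_n])
         (tScal (@kdelta k _ i j))
| Hrel2 (a : nat) (i j : 'I_n) :
    @Hrel k m n (sumt [seq tMul (tGen (a.+1, l, i)) (tGen (a, l, j)) | l <- enum 'I_m])
         (tScal (@kdelta k _ i j)).

Definition H (k : fieldType) (m n : nat) : pres k := @Pres k (Hgen m n) (@Hrel k m n).

Definition comult (k : fieldType) (p q r : nat) :
    Hgen p r -> term k (Hgen p q + Hgen q r) :=
  fun g => let: (a, i, j) := g in
    sumt [seq tMul (tGen (inl (a, i, l))) (tGen (inr (a, l, j))) | l <- enum 'I_q].

Definition Hcounit (k : fieldType) (p : nat) : Hgen p p -> term k Empty_set :=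
  fun g => let: (a, i, j) := g in tScal (@kdelta k _ i j).

(* H(p, q) is presented by matrices x^(a), a in N, subject to x^(a) tx^(a+1) = 1 and
   tx^(a+1) x^(a) = 1, so a family of matrices over a ring satisfies these relations exactly
   when it defines a morphism out of H(p, q).  If x and y satisfy them and the entries of x
   commute with those of y, then so does xy: this makes the comultiplications
   H(p, r) -> H(p, q) (x) H(q, r) algebra maps.  Identity matrices give the counit, and
   x^(a) |-> tx^(a+1) sends such families to families over the opposite ring, which gives the
   map S : H(q, p) -> H(p, q).  Coassociativity and the counit laws are then matrix identities,
   and the two identities of (HG4) are the defining relations themselves.

   It remains to see that H(p, q) is nonzero for p, q >= 2.  Orient the relations towards the
   leading words x^(a)_{i,c_a} x^(a+1)_{j,c_a} and x^(a+1)_{r_a,i} x^(a)_{r_a,j}, where c_a and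
   r_a are the first index for even a and the last one for odd a.  As p, q >= 2, consecutive
   c_a (and r_a) differ, so the only overlaps are x^(a)_{i,c_a} x^(a+1)_{r_a,c_a} x^(a)_{r_a,l}
   and its mirror image, and both resolve.  Left multiplication by the generators on normal
   words is therefore a representation of H(p, q), in which 1 and 0 act differently. *)

From HB Require Import structures.
From mathcomp Require Import all_boot all_order all_algebra.
From mathcomp Require Import zify boolp.
Set Implicit Arguments.
Unset Strict Implicit.
Unset Printing Implicit Defensive.
Import GRing.Theory.
Local Open Scope ring_scope.

(** * Presented algebras *)

Section QuotientAlgebra.
Variables (k : fieldType) (P : pres k).
Local Notation term := (term k (gen P)).

Definition alg := {c : term -> Prop | exists t, c = eqv P t}.
Definition pi (t : term) : alg := exist _ (eqv P t) (ex_intro _ t erefl).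

Lemma eqv_piP s t : eqv P s t <-> pi s = pi t.
Proof.
split=> [st | /(congr1 sval) /= ->]; last exact: eqv_refl.
apply: eq_exist; apply: funext => u; apply: propext.
by split=> [/(eqv_trans (eqv_sym st)) | /(eqv_trans st)].
Qed.

Definition repr (x : alg) : term := sval (cid (svalP x)).

Lemma reprK : cancel repr pi.
Proof.
move=> [c cP]; rewrite /repr; case: cid => t /= ct.
by apply: eq_exist; rewrite ct.
Qed.

Lemma pi_ind (Q : alg -> Prop) : (forall t, Q (pi t)) -> forall x, Q x.
Proof. by move=> Qpi x; rewrite -(reprK x). Qed.

HB.instance Definition _ := gen_eqMixin alg.
HB.instance Definition _ := gen_choiceMixin alg.

Definition alg_add x y := pi (tAdd (repr x) (repr y)).
Definition alg_mul x y := pi (tMul (repr x) (repr y)).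
Definition alg_opp x := pi (tMul (tScal (-1)) (repr x)).
Definition sc (a : k) : alg := pi (tScal a).

Lemma eqv_repr t : eqv P (repr (pi t)) t.
Proof. by apply/eqv_piP; rewrite reprK. Qed.

Lemma alg_addE s t : alg_add (pi s) (pi t) = pi (tAdd s t).
Proof. by apply/eqv_piP; apply: eqv_add; apply: eqv_repr. Qed.

Lemma alg_mulE s t : alg_mul (pi s) (pi t) = pi (tMul s t).
Proof. by apply/eqv_piP; apply: eqv_mul; apply: eqv_repr. Qed.

Lemma alg_oppE t : alg_opp (pi t) = pi (tMul (tScal (-1)) t).
Proof. by apply/eqv_piP; apply: eqv_mul (eqv_refl _) (eqv_repr _). Qed.

Ltac alg_law :=
  repeat (let t := fresh "t" in elim/pi_ind=> t);
  rewrite ?(alg_oppE, alg_addE, alg_mulE); apply/eqv_piP.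

Lemma alg_addA : associative alg_add. Proof. by alg_law; apply: eqv_addA. Qed.
Lemma alg_addC : commutative alg_add. Proof. by alg_law; apply: eqv_addC. Qed.
Lemma alg_add0 : left_id (sc 0) alg_add. Proof. by alg_law; apply: eqv_add0. Qed.
Lemma alg_addN : left_inverse (sc 0) alg_opp alg_add.
Proof. by alg_law; apply: eqv_trans (eqv_addC _ _) (eqv_addN _). Qed.
Lemma alg_mulA : associative alg_mul. Proof. by alg_law; apply: eqv_mulA. Qed.
Lemma alg_mul1 : left_id (sc 1) alg_mul. Proof. by alg_law; apply: eqv_mul1l. Qed.
Lemma alg_mulr1 : right_id (sc 1) alg_mul. Proof. by alg_law; apply: eqv_mul1r. Qed.
Lemma alg_mulDl : left_distributive alg_mul alg_add.
Proof. by alg_law; apply: eqv_mulDl. Qed.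
Lemma alg_mulDr : right_distributive alg_mul alg_add.
Proof. by alg_law; apply: eqv_mulDr. Qed.

HB.instance Definition _ := GRing.isPzRing.Build alg
  alg_addA alg_addC alg_add0 alg_addN alg_mulA alg_mul1 alg_mulr1 alg_mulDl alg_mulDr.

Lemma piD s t : pi (tAdd s t) = pi s + pi t. Proof. by rewrite -alg_addE. Qed.
Lemma piM s t : pi (tMul s t) = pi s * pi t. Proof. by rewrite -alg_mulE. Qed.

Lemma pi_tScal a : pi (tScal a) = sc a. Proof. by []. Qed.

Lemma sc_is_zmod_morphism : zmod_morphism sc.
Proof.
move=> a b; change (pi (tScal (a - b)) = alg_add (sc a) (alg_opp (sc b))).
rewrite alg_oppE alg_addE; apply/eqv_piP.
apply: eqv_trans (eqv_scalD _ a (- b)) (eqv_add (eqv_refl _) _).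
by rewrite -[- b]mulN1r; apply: eqv_scalM.
Qed.

Lemma sc_is_monoid_morphism : monoid_morphism sc.
Proof. by split=> // a b; rewrite -piM; apply/eqv_piP/eqv_scalM. Qed.

HB.instance Definition _ := GRing.isZmodMorphism.Build k alg sc sc_is_zmod_morphism.
HB.instance Definition _ := GRing.isMonoidMorphism.Build k alg sc sc_is_monoid_morphism.

Lemma sc_central a x : sc a * x = x * sc a.
Proof. by elim/pi_ind: x => t; rewrite -!piM; apply/eqv_piP/eqv_scalC. Qed.

End QuotientAlgebra.

Section Evaluation.
Variables (k : fieldType) (R : pzRingType) (c : {rmorphism k -> R}).

Fixpoint eval (X : Type) (phi : X -> R) (t : term k X) : R :=
  match t with
  | tGen x => phi x
  | tScal a => c a
  | tAdd s u => eval phi s + eval phi u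
  | tMul s u => eval phi s * eval phi u
  end.

Lemma eval_sumt (X : Type) (phi : X -> R) (s : seq (term k X)) :
  eval phi (sumt s) = \sum_(t <- s) eval phi t.
Proof. by elim: s => [|t s IHs]; rewrite ?big_nil ?big_cons /= ?rmorph0 ?IHs. Qed.

Hypothesis c_central : forall a x, c a * x = x * c a.

Lemma eval_eqv (P : pres k) (phi : gen P -> R) :
  (forall s t, rel P s t -> eval phi s = eval phi t) ->
  forall s t, eqv P s t -> eval phi s = eval phi t.
Proof.
move=> phi_rel s t; elim=> {s t} /=; try by move=> *; congruence.
- exact: phi_rel.
- by move=> *; rewrite addrA.
- by move=> *; rewrite addrC.
- by move=> *; rewrite rmorph0 add0r.
- by move=> *; rewrite rmorphN1 mulN1r subrr rmorph0.
- by move=> *; rewrite mulrA.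
- by move=> *; rewrite rmorph1 mul1r.
- by move=> *; rewrite rmorph1 mulr1.
- by move=> *; rewrite mulrDl.
- by move=> *; rewrite mulrDr.
- by move=> *; rewrite rmorphD.
- by move=> *; rewrite rmorphM.
Qed.

End Evaluation.

Section Presentations.
Variable k : fieldType.

Lemma subst_comp (X Y W : Type) (f : Y -> term k W) (g : X -> term k Y) t :
  subst f (subst g t) = subst (fun x => subst f (g x)) t.
Proof. by elim: t => //= [s -> u ->|s -> u ->]. Qed.

Lemma subst_id (X : Type) (t : term k X) : subst tGen t = t.
Proof. by elim: t => //= [s -> u ->|s -> u ->]. Qed.

Lemma subst_sumt (X Y : Type) (f : X -> term k Y) (s : seq (term k X)) :
  subst f (sumt s) = sumt (map (subst f) s).
Proof. by elim: s => //= t s ->. Qed.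

Lemma eqv_subst (X : Type) (Q : pres k) (f g : X -> term k (gen Q)) t :
  (forall x, eqv Q (f x) (g x)) -> eqv Q (subst f t) (subst g t).
Proof.
move=> fg; elim: t => /= [x|a|s IHs u IHu|s IHs u IHu]; rewrite ?fg //.
- exact: eqv_refl.
- exact: eqv_add.
- exact: eqv_mul.
Qed.

Lemma pi_subst (Q : pres k) (X : Type) (f : X -> term k (gen Q)) t :
  pi (subst f t) = eval (sc Q) (fun x => pi (f x)) t.
Proof. by elim: t => //= [s <- u <-|s <- u <-]; rewrite ?piD ?piM. Qed.

Lemma pi_sumt (Q : pres k) (s : seq (term k (gen Q))) : pi (sumt s) = \sum_(t <- s) pi t.
Proof. by elim: s => [|t s IHs]; rewrite ?big_nil ?big_cons //= piD IHs. Qed.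

Lemma is_alg_morph_rel (P Q : pres k) (f : gen P -> term k (gen Q)) :
  (forall s t, rel P s t -> eqv Q (subst f s) (subst f t)) -> is_alg_morph P Q f.
Proof.
move=> f_rel s t st; apply/eqv_piP; rewrite !pi_subst.
apply: (eval_eqv (@sc_central _ Q)) st => {}s {}t /f_rel /eqv_piP.
by rewrite !pi_subst.
Qed.

Lemma tens_inl_morph (P Q : pres k) : is_alg_morph P (tens P Q) (fun x => tGen (inl x)).
Proof. by apply: is_alg_morph_rel => s t st; apply/eqv_rel/TRl. Qed.

Lemma tens_inr_morph (P Q : pres k) : is_alg_morph Q (tens P Q) (fun y => tGen (inr y)).
Proof. by apply: is_alg_morph_rel => s t st; apply/eqv_rel/TRr. Qed.

Lemma tens_comm (P Q : pres k) (x : gen P) (y : gen Q) :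
  GRing.comm (@pi _ (tens P Q) (tGen (inl x))) (@pi _ (tens P Q) (tGen (inr y))).
Proof. by rewrite /GRing.comm -!piM; apply/eqv_piP/eqv_rel/TRc. Qed.

End Presentations.

(** * Matrices satisfying the relations of H(p, q) *)

Lemma sumr_delta (V : nmodType) (n : nat) (s : 'I_n) (F : 'I_n -> V) :
  \sum_(t < n) F t *+ (s == t) = F s.
Proof. by rewrite (bigD1 s) //= eqxx big1 ?addr0 // => t; rewrite eq_sym => /negbTE ->. Qed.

Lemma mulr_sum_comm (R : pzRingType) (n m : nat) (x y : 'I_n -> R) (x' y' : 'I_m -> R) :
  (forall s t, GRing.comm (y s) (x' t)) ->
  (\sum_(s < n) x s * y s) * (\sum_(t < m) x' t * y' t) =
  \sum_(s < n) \sum_(t < m) (x s * x' t) * (y s * y' t).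
Proof.
move=> yx'; rewrite mulr_suml; apply: eq_bigr => s _; rewrite mulr_sumr.
by apply: eq_bigr => t _; rewrite -!mulrA (mulrA (y s)) yx' -!mulrA.
Qed.

Lemma kdeltaE (k : fieldType) (n : nat) (i j : 'I_n) : kdelta k i j = (i == j)%:R.
Proof. by rewrite /kdelta; case: eqP. Qed.

Lemma kdeltaC (k : fieldType) (n : nat) (i j : 'I_n) : kdelta k i j = kdelta k j i.
Proof. by rewrite !kdeltaE eq_sym. Qed.

Lemma sum_kdelta (k : fieldType) (n : nat) (P : pred 'I_n) (i : 'I_n) (X : 'I_n -> k) :
  \sum_(t < n | P t) kdelta k i t * X t = if P i then X i else 0.
Proof.
rewrite big_mkcond (bigD1 i) //= kdeltaE eqxx mul1r big1 ?addr0 => [|t ti].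
  by case: (P i).
by rewrite kdeltaE eq_sym (negbTE ti) mul0r; case: (P t).
Qed.

Section HRelations.
Variable R : pzRingType.

Definition Hrelations (p q : nat) (x : nat -> 'I_p -> 'I_q -> R) : Prop :=
  (forall a i j, \sum_(l < q) x a i l * x a.+1 j l = (i == j)%:R) /\
  (forall a i j, \sum_(l < p) x a.+1 l i * x a l j = (i == j)%:R).

Lemma Hrelations_mul (p q r : nat)
    (x : nat -> 'I_p -> 'I_q -> R) (y : nat -> 'I_q -> 'I_r -> R) :
  Hrelations x -> Hrelations y -> (forall a b i j i' j', GRing.comm (x a i j) (y b i' j')) ->
  Hrelations (fun a i j => \sum_(s < q) x a i s * y a s j).
Proof.
move=> [x1 x2] [y1 y2] xy; have yx a b i j i' j' := commr_sym (xy b a i' j' i j).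
split=> a i j; under eq_bigr do rewrite mulr_sum_comm //.
all: rewrite exchange_big /=; under eq_bigr do rewrite exchange_big /=.
- rewrite -[RHS](x1 a i j); apply: eq_bigr => s _.
  under eq_bigr do rewrite -mulr_sumr y1 mulr_natr.
  exact: sumr_delta.
- rewrite -[RHS](y2 a i j); apply: eq_bigr => s _.
  under eq_bigr do rewrite -mulr_suml x2 mulr_natl.
  exact: sumr_delta.
Qed.

Lemma Hrelations_delta (p : nat) : Hrelations (fun (a : nat) (i j : 'I_p) => (i == j)%:R).
Proof.
split=> a i j; under eq_bigr do rewrite mulr_natr.
  exact: sumr_delta.
under eq_bigr => l _ do rewrite (eq_sym l j).
by rewrite [i == j]eq_sym; apply: sumr_delta.
Qed.

End HRelations.

Lemma Hrelations_rev (R : pzRingType) (p q : nat) (x : nat -> 'I_p -> 'I_q -> R) :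
  Hrelations x -> @Hrelations R^c q p (fun a i j => x a.+1 j i).
Proof. by move=> [x1 x2]; split=> a i j; rewrite eq_sym; [apply: x2 | apply: x1]. Qed.

Section HUniversalProperty.
Variables (k : fieldType) (p q : nat).

Lemma eval_Hrel (R : pzRingType) (c : {rmorphism k -> R}) (x : Hgen p q -> R) :
  (forall s t, Hrel s t -> eval c x s = eval c x t) <->
  Hrelations (fun a i j => x (a, i, j)).
Proof.
have evalE (n : nat) (y z : 'I_n -> Hgen p q) :
    eval c x (sumt [seq tMul (tGen (y l)) (tGen (z l)) | l <- enum 'I_n]) =
    \sum_(l < n) x (y l) * x (z l).
  by rewrite eval_sumt big_map big_enum.
have deltaE (n : nat) (i j : 'I_n) : eval c x (tScal (kdelta k i j)) = (i == j)%:R.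
  by rewrite /= kdeltaE rmorph_nat.
split=> [x_rel | [x1 x2] s t [a i j|a i j]]; rewrite ?evalE ?deltaE //.
by split=> a i j; rewrite -evalE -deltaE; apply: x_rel; constructor.
Qed.

Lemma alg_morph_HP (Q : pres k) (f : Hgen p q -> term k (gen Q)) :
  is_alg_morph (H k p q) Q f <-> Hrelations (fun a i j => pi (f (a, i, j))).
Proof.
split=> [f_morph | /(eval_Hrel (sc Q) (fun g => pi (f g))) f_rel].
  apply/(eval_Hrel (sc Q) (fun g => pi (f g))) => s t.
  move=> /(@eqv_rel _ (H k p q)) /f_morph /eqv_piP.
  by rewrite !pi_subst.
by apply: is_alg_morph_rel => s t /f_rel; rewrite -!pi_subst => /eqv_piP.
Qed.

Lemma Hrelations_gen : Hrelations (fun a i j => @pi _ (H k p q) (tGen (a, i, j))).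
Proof. by apply/alg_morph_HP => s t; rewrite !subst_id. Qed.

End HUniversalProperty.

(** * The structure maps *)

Section Comultiplication.
Variables (k : fieldType) (p q r : nat).
Local Notation T := (tens (H k p q) (H k q r)).
Local Notation X a i s := (@pi _ T (tGen (inl (a, i, s)))).
Local Notation Y a s j := (@pi _ T (tGen (inr (a, s, j)))).

Lemma pi_comult a i j : @pi _ T (comult k q (a, i, j)) =
  \sum_(s < q) X a i s * Y a s j.
Proof. by rewrite pi_sumt big_map big_enum; apply: eq_bigr => s _; apply: piM. Qed.

Lemma comult_morph : is_alg_morph (H k p r) T (@comult k p q r).
Proof.
apply/alg_morph_HP.
have -> : (fun a i j => @pi _ T (comult k q (a, i, j))) =
    (fun a i j => \sum_(s < q) X a i s * Y a s j).
  by do 3!apply: funext => ?; apply: pi_comult.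
apply: Hrelations_mul => [||*]; last exact: tens_comm.
- exact/(@alg_morph_HP _ _ _ T (fun g => tGen (inl g)))/tens_inl_morph.
- exact/(@alg_morph_HP _ _ _ T (fun g => tGen (inr g)))/tens_inr_morph.
Qed.

End Comultiplication.

Lemma counit_morph (k : fieldType) (p : nat) : is_alg_morph (H k p p) (kpres k) (@Hcounit k p).
Proof.
apply/alg_morph_HP.
have -> : (fun a i j => @pi _ (kpres k) (@Hcounit k p (a, i, j))) = (fun a i j => (i == j)%:R).
  by do 3!apply: funext => ?; rewrite /= pi_tScal kdeltaE rmorph_nat.
exact: Hrelations_delta.
Qed.

Section Coassociativity.
Variables (k : fieldType) (p q r s : nat).

Lemma comult_coassoc :
  eqmap (H k p s) (tens (H k p q) (tens (H k q r) (H k r s)))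
    (fun t => subst (@assocg k _ _ _)
                (subst (tensor_map (@comult k p q r) (@idg k _)) (subst (@comult k p r s) t)))
    (fun t => subst (tensor_map (@idg k _) (@comult k q r s)) (subst (@comult k p q s) t)).
Proof.
move=> t; rewrite !subst_comp; apply: eqv_subst => [[[a i] j]]; apply/eqv_piP.
rewrite !pi_subst /= !eval_sumt !big_map /=.
under eq_bigr do rewrite /tmap subst_comp subst_sumt pi_sumt -map_comp big_map big_distrl /=.
under [RHS]eq_bigr do rewrite /tmap subst_sumt pi_sumt -map_comp big_map big_distrr /=.
rewrite exchange_big /= !enumT; apply: eq_bigr => u _; apply: eq_bigr => v _.
by rewrite !piM mulrA.
Qed.

End Coassociativity.

Section CounitLaws.
Variables (k : fieldType) (p r : nat).

Lemma comult_lcounit :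
  eqmap (H k p r) (H k p r)
    (fun t => subst (@lunitg k _)
                (subst (tensor_map (@Hcounit k p) (@idg k _)) (subst (@comult k p p r) t)))
    (fun t => t).
Proof.
move=> t; rewrite !subst_comp -{2}(subst_id t); apply: eqv_subst => [[[a i] j]]; apply/eqv_piP.
rewrite !pi_subst /= eval_sumt big_map big_enum /=.
under eq_bigr do rewrite pi_tScal kdeltaE rmorph_nat mulr_natl.
exact: sumr_delta.
Qed.

Lemma comult_rcounit :
  eqmap (H k p r) (H k p r)
    (fun t => subst (@runitg k _)
                (subst (tensor_map (@idg k _) (@Hcounit k r)) (subst (@comult k p r r) t)))
    (fun t => t).
Proof.
move=> t; rewrite !subst_comp -{2}(subst_id t); apply: eqv_subst => [[[a i] j]]; apply/eqv_piP.
rewrite !pi_subst /= eval_sumt big_map big_enum /=.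
under eq_bigr do rewrite pi_tScal kdeltaE rmorph_nat mulr_natr eq_sym.
exact: sumr_delta.
Qed.

End CounitLaws.

Section Antipode.
Variables (k : fieldType) (p q : nat).
Local Notation Z := (H k p q).

Fixpoint antipode (t : term k (Hgen q p)) : term k (Hgen p q) :=
  match t with
  | tGen (a, i, j) => tGen (a.+1, j, i)
  | tScal c => tScal c
  | tAdd s u => tAdd (antipode s) (antipode u)
  | tMul s u => tMul (antipode u) (antipode s)
  end.

Definition sc_rev : k -> (alg Z)^c := sc Z.

Lemma sc_rev_is_monoid_morphism : monoid_morphism sc_rev.
Proof. by split=> // a b; rewrite /sc_rev mulrC rmorphM. Qed.

HB.instance Definition _ := GRing.isZmodMorphism.Build k (alg Z)^c sc_rev (rmorphB (sc Z)).
HB.instance Definition _ :=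
  GRing.isMonoidMorphism.Build k (alg Z)^c sc_rev sc_rev_is_monoid_morphism.

Lemma pi_antipode t :
  @pi _ Z (antipode t) = eval sc_rev (fun g => @pi _ Z (antipode (tGen g)) : (alg Z)^c) t.
Proof. by elim: t => [[[a i] j]|c|s IHs u IHu|s IHs u IHu] //=; rewrite ?piD ?piM ?IHs ?IHu. Qed.

Lemma antipode_linear : is_linear (H k q p) Z antipode.
Proof.
split=> [s t st | s t | c t]; last exact/eqv_sym/eqv_scalC.
  apply/eqv_piP; rewrite !pi_antipode.
  apply: (@eval_eqv _ _ sc_rev (fun a x => esym (@sc_central _ Z a x))) st.
  apply/(eval_Hrel sc_rev (fun g => @pi _ Z (antipode (tGen g)) : (alg Z)^c)).
  exact: Hrelations_rev (Hrelations_gen _ _ _).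
exact: eqv_refl.
Qed.

End Antipode.

Section AntipodeAxioms.
Variables (k : fieldType) (p q : nat).
Local Notation Z := (H k p q).

Fixpoint scalar_of (e : term k Empty_set) : k :=
  match e with
  | tGen x => match x with end
  | tScal c => c
  | tAdd s u => scalar_of s + scalar_of u
  | tMul s u => scalar_of s * scalar_of u
  end.

Lemma pi_unitg (P : pres k) e : @pi _ P (subst (@unitg k _) e) = sc P (scalar_of e).
Proof.
by elim: e => [[]|c|s IHs u IHu|s IHs u IHu] //=; rewrite ?piD ?piM ?IHs ?IHu ?rmorphD ?rmorphM.
Qed.

Lemma split_sumt (X Y : Type) (s : seq (term k (X + Y))) :
  split (sumt s) = flatten (map (@split k X Y) s) ++ [:: (tScal 0, tScal 1)].
Proof. by elim: s => //= t s ->; rewrite catA. Qed.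

Lemma pi_lin_tensor (P : pres k) (X Y : Type) (F : term k X -> term k Y -> term k (gen P)) v :
  pi (lin_tensor F v) = \sum_(x <- split v) pi (F x.1 x.2).
Proof. by rewrite /lin_tensor pi_sumt big_map. Qed.

Lemma comult_antipode_r : eqmap (H k p p) Z
  (fun t => lin_tensor (fun z u => tMul z (antipode u)) (subst (@comult k p q p) t))
  (fun t => subst (@unitg k _) (subst (@Hcounit k p) t)).
Proof.
have [rel1 _] := Hrelations_gen k p q.
move=> t; apply/eqv_piP; rewrite pi_lin_tensor pi_unitg.
under eq_bigr do rewrite piM.
elim: t => [[[a i] j]|c|s IHs u IHu|s IHs u IHu] /=.
- rewrite split_sumt big_cat big_flatten !big_map /= big_cons big_nil.
  under eq_bigr => l _ do rewrite /= big_cons big_nil /= !piM !pi_tScal rmorph1 !mulr1 addr0.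
  by rewrite pi_tScal rmorph0 mul0r !addr0 kdeltaE rmorph_nat -(rel1 a i j).
- by rewrite big_cons big_nil /= mulr1 addr0.
- by rewrite big_cat IHs IHu rmorphD.
- rewrite big_allpairs_dep /=.
  under eq_bigr => x _ do under eq_bigr => y _ do
    rewrite !piM -!mulrA (mulrA (@pi _ Z y.1)).
  under eq_bigr => x _ do rewrite -big_distrr -big_distrl /= IHu mulrA -sc_central -mulrA.
  by rewrite -big_distrr /= IHs rmorphM sc_central.
Qed.

Lemma comult_antipode_l : eqmap (H k q q) Z
  (fun t => lin_tensor (fun u z => tMul (antipode u) z) (subst (@comult k q p q) t))
  (fun t => subst (@unitg k _) (subst (@Hcounit k q) t)).
Proof.
have [_ rel2] := Hrelations_gen k p q.
move=> t; apply/eqv_piP; rewrite pi_lin_tensor pi_unitg.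
under eq_bigr do rewrite piM.
elim: t => [[[a i] j]|c|s IHs u IHu|s IHs u IHu] /=.
- rewrite split_sumt big_cat big_flatten !big_map /= big_cons big_nil.
  under eq_bigr => l _ do rewrite /= big_cons big_nil /= !piM !pi_tScal rmorph1 !mul1r addr0.
  by rewrite pi_tScal rmorph0 mul0r !addr0 kdeltaE rmorph_nat -(rel2 a i j).
- by rewrite big_cons big_nil /= !pi_tScal rmorph1 mulr1 addr0.
- by rewrite big_cat IHs IHu rmorphD.
- rewrite big_allpairs_dep /= exchange_big /=.
  under eq_bigr => y _ do under eq_bigr => x _ do
    rewrite !piM -!mulrA (mulrA (@pi _ Z (antipode x.1))).
  under eq_bigr => y _ do rewrite -big_distrr -big_distrl /= IHs mulrA -sc_central -mulrA.
  by rewrite -big_distrr /= IHu rmorphM.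
Qed.

End AntipodeAxioms.

(** * Normal forms *)

Section NormalForms.
Variables (k : fieldType) (p q : nat).
Hypotheses (p_gt1 : (1 < p)%N) (q_gt1 : (1 < q)%N).
Local Notation letter := (Hgen p q).
Local Notation word := (seq letter).
Local Notation comb := (seq (k * word)).

Fact lead_row_subproof a : ((if odd a then p.-1 else 0) < p)%N.
Proof. by case: odd; lia. Qed.
Definition lead_row a : 'I_p := Ordinal (lead_row_subproof a).

Fact lead_col_subproof a : ((if odd a then q.-1 else 0) < q)%N.
Proof. by case: odd; lia. Qed.
Definition lead_col a : 'I_q := Ordinal (lead_col_subproof a).

Lemma lead_row_neq a : lead_row a != lead_row a.+1.
Proof. by rewrite -val_eqE /=; case: odd; apply/eqP; lia. Qed.

Lemma lead_col_neq a : lead_col a != lead_col a.+1.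
Proof. by rewrite -val_eqE /=; case: odd; apply/eqP; lia. Qed.

Definition leading (g h : letter) : bool :=
  let: (a, i, j) := g in let: (b, i', j') := h in
  [&& b == a.+1, j == lead_col a & j' == lead_col a] ||
  [&& a == b.+1, i == lead_row b & i' == lead_row b].

(* [reduct g h = (c, s)] encodes the rewriting rule [g h -> c - \sum_(x <- s) x.1 x.2]. *)
Definition reduct (g h : letter) : k * seq (letter * letter) :=
  let: (a, i, j) := g in let: (b, i', j') := h in
  if b == a.+1 then
    (kdelta k i i', [seq ((a, i, l), (a.+1, i', l)) | l <- enum 'I_q & l != lead_col a])
  else (kdelta k j j', [seq ((a, l, j), (b, l, j')) | l <- enum 'I_p & l != lead_row b]).

Definition reducible (g : letter) (w : word) : bool :=
  if w is h :: _ then leading g h else false.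

Fixpoint normal (w : word) : bool :=
  if w is g :: w' then ~~ reducible g w' && normal w' else true.

(* The number of leading words that [g] can begin. *)
Definition weight (g : letter) : nat :=
  let: (a, i, j) := g in
  (j == lead_col a) + (if a is a'.+1 then i == lead_row a' else false).

Lemma weight_le2 g : (weight g <= 2)%N.
Proof. by case: g => [[[|a] i] j]; rewrite -[2%N]/(1 + 1)%N; apply: leq_add; apply: leq_b1. Qed.

Lemma weight_reduct g h x : leading g h -> x \in (reduct g h).2 -> (weight x.1).+1 = weight g.
Proof.
case: g h => [[a i] j] [[b i'] j'] /= /orP[/and3P[/eqP-> /eqP-> _] | /and3P[/eqP-> /eqP-> _]].
  rewrite eqxx /= => /mapP[l]; rewrite mem_filter => /andP[/negbTE lc _] -> /=.
  by rewrite lc eqxx.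
rewrite (ltn_eqF (leqnSn _)) /= => /mapP[l]; rewrite mem_filter => /andP[/negbTE lr _] -> /=.
by rewrite lr eqxx addn0 addn1.
Qed.

Definition comb_act (F : letter -> word -> comb) (g : letter) (v : comb) : comb :=
  flatten [seq [seq (z.1 * y.1, y.2) | y <- F g z.2] | z <- v].

(* The normal form of [g w], for [w] normal, computed with recursion depth [n]. *)
Fixpoint act_fuel (n : nat) (g : letter) (w : word) {struct n} : comb :=
  match n, w with
  | 0, _ => [::]
  | n'.+1, h :: w' =>
    if leading g h then
      ((reduct g h).1, w') ::
      [seq (- z.1, z.2) | z <- flatten [seq comb_act (act_fuel n') x.1 (act_fuel n' x.2 w')
                                       | x <- (reduct g h).2]]
    else [:: (1, g :: w)]
  | _.+1, [::] => [:: (1, [:: g])]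
  end.

Lemma mem_comb_act F g v y : y \in comb_act F g v ->
  exists2 z, z \in v & exists2 y', y' \in F g z.2 & y.2 = y'.2.
Proof. by move=> /flattenP[s /mapP[z zv ->]] /mapP[y' y'F ->]; exists z => //; exists y'. Qed.

Lemma size_act_fuel n g w z : z \in act_fuel n g w -> (size z.2 <= (size w).+1)%N.
Proof.
elim: n g w z => [|n IHn] g [|h w] z //=; first by rewrite inE => /eqP->.
case: ifP => _; last by rewrite inE => /eqP->.
rewrite inE => /orP[/eqP-> /= | ]; first exact: leqW.
move=> /mapP[z' /flattenP[s /mapP[x _ ->]] /mem_comb_act[y yin [y' y'in ->]]] ->.
by apply: leq_trans (IHn _ _ _ y'in) _; rewrite ltnS (IHn _ _ _ yin).
Qed.

Lemma normal_act_fuel n g w z : normal w -> z \in act_fuel n g w -> normal z.2.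
Proof.
elim: n g w z => [|n IHn] g [|h w] z //=; first by move=> _; rewrite inE => /eqP->.
move=> /andP[hw nw]; case: ifP => gh; last by rewrite inE => /eqP-> /=; rewrite gh hw nw.
rewrite inE => /orP[/eqP-> // | ].
move=> /mapP[z' /flattenP[s /mapP[x _ ->]] /mem_comb_act[y yin [y' y'in ->]]] ->.
exact: IHn (IHn _ _ _ nw yin) y'in.
Qed.

Lemma act_fuel_stable n n' g w : (3 * size w + weight g < n)%N -> (3 * size w + weight g < n')%N ->
  act_fuel n g w = act_fuel n' g w.
Proof.
elim: n n' g w => [|n IHn] [|n'] g [|h w] //= lt_n lt_n'.
case: ifP => // gh; congr (_ :: map _ (flatten _)); apply/eq_in_map => -[x1 x2] xin /=.
have /= wx := weight_reduct gh xin; have := weight_le2 x2; have := weight_le2 g.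
rewrite mulnS in lt_n lt_n' => wg wx2.
have -> : act_fuel n x2 w = act_fuel n' x2 w by apply: IHn; lia.
congr flatten; apply/eq_in_map => -[c u] /size_act_fuel uw; congr map.
have bound m : (3 + 3 * size w + weight g < m.+1)%N -> (3 * size u + weight x1 < m)%N.
  by move: uw => /= uw; lia.
by apply: IHn; apply: bound.
Qed.

Definition act (g : letter) (w : word) : comb := act_fuel (3 * size w + 3) g w.

Lemma act_fuelE n g w : (3 * size w + weight g < n)%N -> act_fuel n g w = act g w.
Proof. by move=> lt_n; apply: act_fuel_stable lt_n _; have := weight_le2 g; lia. Qed.

Lemma act_irr g u : ~~ reducible g u -> act g u = [:: (1, g :: u)].
Proof.
rewrite /act (_ : 3 * size u + 3 = (3 * size u + 2).+1)%N ?addnS //=.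
by case: u => [|h u] //= /negbTE ->.
Qed.

Lemma act_red g h w : leading g h -> act g (h :: w) =
  ((reduct g h).1, w) ::
  [seq (- z.1, z.2) | z <- flatten [seq comb_act act x.1 (act x.2 w) | x <- (reduct g h).2]].
Proof.
move=> gh; rewrite -(@act_fuelE (3 * size w + 5).+1) /= ?gh; last first.
  by have := weight_le2 g; lia.
congr (_ :: map _ (flatten _)); apply/eq_in_map => -[x1 x2] xin /=.
have /= wx := weight_reduct gh xin; have := weight_le2 x2; have := weight_le2 g => wg wx2.
rewrite act_fuelE; last by lia.
congr flatten; apply/eq_in_map => -[c u] /size_act_fuel uw; congr map.
have bound : (3 * size u + weight x1 < 3 * size w + 5)%N by move: uw => /= uw; lia.
by rewrite act_fuelE.
Qed.

Lemma normal_act g w z : normal w -> z \in act g w -> normal z.2.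
Proof. exact: normal_act_fuel. Qed.

Definition evalc (f : word -> k) (v : comb) : k := \sum_(z <- v) z.1 * f z.2.

(* The module spanned by normal words is handled through its dual: [dact g f] is the
   functional [f] composed with left multiplication by [g]. *)
Definition dact (g : letter) (f : word -> k) (u : word) : k := evalc f (act g u).

Lemma evalc_comb_act f g v : evalc f (comb_act act g v) = evalc (dact g f) v.
Proof.
rewrite /comb_act /evalc big_flatten big_map; apply: eq_bigr => z _.
by rewrite big_map mulr_sumr; apply: eq_bigr => y _; rewrite mulrA.
Qed.

Lemma dact_irr g f u : ~~ reducible g u -> dact g f u = f (g :: u).
Proof. by move=> irr; rewrite /dact act_irr // /evalc big_seq1 mul1r. Qed.

Lemma dact_red g h f w : leading g h ->
  dact g f (h :: w) = (reduct g h).1 * f w - \sum_(x <- (reduct g h).2) dact x.2 (dact x.1 f) w.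
Proof.
move=> gh; rewrite {1}/dact act_red // /evalc big_cons big_map big_flatten big_map -sumrN.
congr (_ + _); apply: eq_bigr => x _.
rewrite (_ : dact x.2 _ w = evalc f (comb_act act x.1 (act x.2 w))); last by rewrite evalc_comb_act.
by rewrite /evalc -sumrN; apply: eq_bigr => z _; rewrite mulNr.
Qed.

Lemma dact_agree g f f' : {in normal, f =1 f'} -> {in normal, dact g f =1 dact g f'}.
Proof. by move=> ff' u nu; apply: eq_big_seq => z /(normal_act nu) nz; rewrite ff'. Qed.

Lemma dactD g f f' u : dact g (fun w => f w + f' w) u = dact g f u + dact g f' u.
Proof. by rewrite /dact /evalc -big_split; apply: eq_bigr => z _; apply: mulrDr. Qed.

Lemma dactZ g c f u : dact g (fun w => c * f w) u = c * dact g f u.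
Proof. by rewrite /dact /evalc mulr_sumr; apply: eq_bigr => z _; apply: mulrCA. Qed.

Lemma dact_sum g (I : Type) (s : seq I) (F : I -> word -> k) u :
  dact g (fun w => \sum_(i <- s) F i w) u = \sum_(i <- s) dact g (F i) u.
Proof. by rewrite /dact /evalc [RHS]exchange_big; apply: eq_bigr => z _; apply: mulr_sumr. Qed.

Lemma leading_lead_col a (j : 'I_p) h :
  leading (a.+1, j, lead_col a) h -> exists l, h = (a, lead_row a, l) /\ j = lead_row a.
Proof.
case: h => [[b i] l] /= /orP[/and3P[_ /eqP c_eq _] | /and3P[/eqP[->] /eqP-> /eqP->]].
  by move: (lead_col_neq a); rewrite c_eq eqxx.
by exists l.
Qed.

Lemma leading_lead_row a (j : 'I_q) h :
  leading (a, lead_row a, j) h -> exists i, h = (a.+1, i, lead_col a) /\ j = lead_col a.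
Proof.
case: h => [[b i] l] /= /orP[/and3P[/eqP-> /eqP-> /eqP->] | /and3P[/eqP a_eq r_eq _]].
  by exists i.
by move: (lead_row_neq b); rewrite -a_eq eq_sym r_eq.
Qed.

Lemma dact_red1 a (i j : 'I_p) f w :
  dact (a, i, lead_col a) f ((a.+1, j, lead_col a) :: w) =
  kdelta k i j * f w - \sum_(l < q | l != lead_col a) dact (a.+1, j, l) (dact (a, i, l) f) w.
Proof. by rewrite dact_red /= ?eqxx // big_map big_filter big_enum_cond. Qed.

Lemma dact_red2 a (l l' : 'I_q) f w :
  dact (a.+1, lead_row a, l) f ((a, lead_row a, l') :: w) =
  kdelta k l l' * f w - \sum_(t < p | t != lead_row a) dact (a, t, l') (dact (a.+1, t, l) f) w.
Proof.
by rewrite dact_red /= ?(ltn_eqF (leqnSn _)) ?eqxx ?orbT // big_map big_filter big_enum_cond.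
Qed.

Lemma dact_rel1_irr a (i j : 'I_p) f u : ~~ reducible (a.+1, j, lead_col a) u ->
  \sum_(l < q) dact (a.+1, j, l) (dact (a, i, l) f) u = kdelta k i j * f u.
Proof. by move=> irr; rewrite (bigD1 (lead_col a)) //= dact_irr // dact_red1 subrK. Qed.

Lemma dact_rel2_irr a (i j : 'I_q) f u : ~~ reducible (a, lead_row a, j) u ->
  \sum_(l < p) dact (a, l, j) (dact (a.+1, l, i) f) u = kdelta k i j * f u.
Proof. by move=> irr; rewrite (bigD1 (lead_row a)) //= dact_irr // dact_red2 subrK. Qed.

Lemma dact_rel1 a (i j : 'I_p) f u : normal u ->
  \sum_(l < q) dact (a.+1, j, l) (dact (a, i, l) f) u = kdelta k i j * f u.
Proof.
case red: (reducible (a.+1, j, lead_col a) u); last first.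
  by move=> _; apply: dact_rel1_irr; rewrite red.
case: u red => [|? u] //= /leading_lead_col[l' [-> ->]] /andP[irr _].
have inner t : t != lead_row a ->
    \sum_(l < q) dact (a, t, l') (dact (a.+1, t, l) (dact (a, i, l) f)) u =
    kdelta k i t * dact (a, t, l') f u.
  move=> tr; rewrite -dactZ -dact_sum; congr dact; apply: funext => w.
  apply: dact_rel1_irr; case: w => [|h' w] //=; apply/negP => /leading_lead_col[? [_ /eqP]].
  exact/negP.
under eq_bigr do rewrite dact_red2 kdeltaC.
rewrite sumrB (sum_kdelta _ _ (fun l => dact (a, i, l) f u)) exchange_big /=.
under [X in _ - X]eq_bigr => t tr do rewrite inner //.
rewrite (sum_kdelta _ _ (fun t => dact (a, t, l') f u)) kdeltaE.
have [->|_] /= := eqVneq i (lead_row a); last by rewrite subrr mul0r.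
by rewrite subr0 mul1r dact_irr.
Qed.

Lemma dact_rel2 a (i j : 'I_q) f u : normal u ->
  \sum_(l < p) dact (a, l, j) (dact (a.+1, l, i) f) u = kdelta k i j * f u.
Proof.
case red: (reducible (a, lead_row a, j) u); last first.
  by move=> _; apply: dact_rel2_irr; rewrite red.
case: u red => [|? u] //= /leading_lead_row[i' [-> ->]] /andP[irr _].
have inner t : t != lead_col a ->
    \sum_(l < p) dact (a.+1, i', t) (dact (a, l, t) (dact (a.+1, l, i) f)) u =
    kdelta k i t * dact (a.+1, i', t) f u.
  move=> tc; rewrite -dactZ -dact_sum; congr dact; apply: funext => w.
  apply: dact_rel2_irr; case: w => [|h w] //=; apply/negP => /leading_lead_row[? [_ /eqP]].
  exact/negP.
under eq_bigr do rewrite dact_red1 kdeltaC.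
rewrite sumrB (sum_kdelta _ _ (fun l => dact (a.+1, l, i) f u)) exchange_big /=.
under [X in _ - X]eq_bigr => t tc do rewrite inner //.
rewrite (sum_kdelta _ _ (fun t => dact (a.+1, i', t) f u)) kdeltaE.
have [->|_] /= := eqVneq i (lead_col a); last by rewrite subrr mul0r.
by rewrite subr0 mul1r dact_irr.
Qed.

(* [rep t f u] stands for [f (t u)], hence the order in the [tMul] case. *)
Fixpoint rep (t : term k letter) (f : word -> k) : word -> k :=
  match t with
  | tGen g => dact g f
  | tScal c => fun u => c * f u
  | tAdd s t => fun u => rep s f u + rep t f u
  | tMul s t => rep t (rep s f)
  end.

Lemma rep_agree t f f' : {in normal, f =1 f'} -> {in normal, rep t f =1 rep t f'}.
Proof.
elim: t f f' => [g|c|s IHs t IHt|s IHs t IHt] f f' ff' u nu /=.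
- exact: dact_agree.
- by rewrite ff'.
- by rewrite (IHs _ f') ?(IHt _ f').
- exact: IHt (IHs _ _ ff') _ nu.
Qed.

Lemma rep_add t f f' : rep t (fun w => f w + f' w) = (fun w => rep t f w + rep t f' w).
Proof.
elim: t f f' => [g|c|s IHs t IHt|s IHs t IHt] f f' /=; apply: funext => u.
- exact: dactD.
- exact: mulrDr.
- by rewrite IHs IHt addrACA.
- by rewrite IHs IHt.
Qed.

Lemma rep_scale t c f : rep t (fun w => c * f w) = (fun w => c * rep t f w).
Proof.
elim: t f => [g|c'|s IHs t IHt|s IHs t IHt] f /=; apply: funext => u.
- exact: dactZ.
- exact: mulrCA.
- by rewrite IHs IHt mulrDr.
- by rewrite IHs IHt.
Qed.

Lemma rep_sumt s f u : rep (sumt s) f u = \sum_(t <- s) rep t f u + 0 * f u.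
Proof. by elim: s => [|t s IHs] /=; rewrite ?big_nil ?add0r // IHs big_cons addrA. Qed.

Lemma rep_eqv s t : eqv (H k p q) s t -> forall f, {in normal, rep s f =1 rep t f}.
Proof.
elim=> {s t} /=.
- by [].
- by move=> s t _ IH f u nu; rewrite IH.
- by move=> s t v _ IH1 _ IH2 f u nu; rewrite IH1 ?IH2.
- by move=> s s' t t' _ IH1 _ IH2 f u nu; rewrite IH1 ?IH2.
- by move=> s s' t t' _ IH1 _ IH2 f u nu; rewrite (@rep_agree t _ _ (IH1 f)) ?IH2.
- move=> s t [a i j|a i j] f u nu; rewrite rep_sumt mul0r addr0 big_map big_enum /=.
    exact: dact_rel1.
  exact: dact_rel2.
- by move=> s t v f u _; rewrite addrA.
- by move=> s t f u _; rewrite addrC.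
- by move=> t f u _; rewrite mul0r add0r.
- by move=> t f u _; rewrite rep_scale mulN1r subrr mul0r.
- by [].
- by move=> t f; rewrite (_ : (fun u => 1 * f u) = f) // funeqE => u; rewrite mul1r.
- by move=> t f u _; rewrite mul1r.
- by move=> s t v f; rewrite rep_add.
- by [].
- by move=> a b f u _; rewrite mulrDl.
- by move=> a b f u _; rewrite mulrA [a * b]mulrC.
- by move=> c t f; rewrite rep_scale.
Qed.

Lemma H_nonzero : nonzero (H k p q).
Proof.
move=> /rep_eqv /(_ (fun w => if w is [::] then 1 else 0) [::] isT) /= /eqP.
by rewrite !mulr1 oner_eq0.
Qed.

End NormalForms.

Theorem proposition5p2 (k : fieldType) (m n : nat) :
  (2 <= m)%N -> (2 <= n)%N ->
  @HG_system k (H k m m) (H k n n) (H k m n) (H k n m)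
    (@comult k m m m) (@Hcounit k m)
    (@comult k n n n) (@Hcounit k n)
    (@comult k m m n) (@comult k m n n)
    (@comult k m n m) (@comult k n m n).
Proof.
move=> m_gt1 n_gt1.
have bialg p : @bialgebra k (H k p p) (@comult k p p p) (@Hcounit k p).
  by split; [apply: comult_morph | apply: counit_morph | apply: comult_coassoc
            | apply: comult_lcounit | apply: comult_rcounit].
split.
- by split; apply: H_nonzero.
- by split; apply: bialg.
- by split; [split|split|]; first [ apply: comult_morph | apply: comult_coassoc
                                  | apply: comult_lcounit | apply: comult_rcounit].
- split; try apply: comult_morph; try apply: comult_coassoc.
  by move=> t; apply/eqv_sym/comult_coassoc.
- exists (@antipode k m n); split.
  + exact: antipode_linear.
  + exact: comult_antipode_r.
  + exact: comult_antipode_l.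
Qed.
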